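(* For integers $n\ge1$, $m\ge0$ let $d_{n,m}=\operatorname{Tr}(J_nB_n^{2m})$. Then $d_{n,0}=1+d_{n-1,0}=n$ (for $n\ge2$; $d_{1,0}=1$), $d_{1,m}=\delta_{0,m}$, and for $n\ge2$, $m\ge1$, $$d_{n,m}=d_{n-1,m}+\sum_{k=0}^{m-1}d_{n-1,k}\,d_{n,m-k-1}.$$
   Context: $J_n$ is the $n\times n$ all-ones matrix, and $B_n=i\,M$ where $M$ is the $n\times n$ matrix with zero diagonal, entries $1$ above and $-1$ below the diagonal ($B_1$ is the $1\times1$ zero matrix). $\delta$ is the Kronecker delta. *)

From HB Require Import structures.
From mathcomp Require Import all_boot all_order all_algebra all_field.
Set Implicit Arguments. Unset Strict Implicit. Unset Printing Implicit Defensive.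
Import Order.TTheory GRing.Theory Num.Theory.
Local Open Scope ring_scope.

Definition Jmx (n : nat) : 'M[algC]_n := const_mx 1.

Definition Mmx (n : nat) : 'M[algC]_n :=
  \matrix_(i, j) (if (i < j)%N then 1 else if (j < i)%N then -1 else 0).

Definition Bmx (n : nat) : 'M[algC]_n := 'i *: Mmx n.

Definition dnm (n m : nat) : algC := \tr (Jmx n *m (Bmx n) ^+ (2 * m)).

From HB Require Import structures.
From mathcomp Require Import all_boot all_order all_algebra all_field.
From mathcomp Require Import ring.
Set Implicit Arguments. Unset Strict Implicit. Unset Printing Implicit Defensive.
Import Order.TTheory GRing.Theory Num.Theory.
Local Open Scope ring_scope.

(* d_{n,m} is the sum of all entries of B_n^{2m}, i.e. 1^T B_n^{2m} 1, and such
   sums vanish for odd powers because B_n is skew-symmetric.  Bordering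
   B_{k+1} = [[B_k, i 1], [-i 1^T, 0]] and writing B_{k+1}^j 1 = (w_j, y_j),
   variation of constants gives w_j = B_k^j 1 + i sum_{t<j} y_t B_k^{j-1-t} 1,
   while y_{j+1} = -i 1^T w_j.  Eliminating w_j leaves a convolution identity
   between y and a_j = 1^T B_k^j 1; since 1^T B_{k+1}^j 1 = y_j + i y_{j+1},
   this convolution is exactly the recurrence, once the odd terms are dropped. *)

Definition mxsum (R : nmodType) m n (A : 'M[R]_(m, n)) : R := \sum_i \sum_j A i j.

Lemma mxsum0 (R : nmodType) m n : mxsum (0 : 'M[R]_(m, n)) = 0.
Proof. by rewrite /mxsum big1 // => i _; rewrite big1 // => j _; rewrite mxE. Qed.

Lemma mxsumD (R : nmodType) m n (A B : 'M[R]_(m, n)) :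
  mxsum (A + B) = mxsum A + mxsum B.
Proof.
rewrite /mxsum -big_split; apply: eq_bigr => i _.
by rewrite -big_split; apply: eq_bigr => j _; rewrite mxE.
Qed.

Lemma mxsum_sum (R : nmodType) m n I (r : seq I) (P : pred I) (F : I -> 'M[R]_(m, n)) :
  mxsum (\sum_(t <- r | P t) F t) = \sum_(t <- r | P t) mxsum (F t).
Proof. exact: (big_morph _ (@mxsumD R m n) (mxsum0 R m n)). Qed.

Lemma mxsumZ (R : pzSemiRingType) m n a (A : 'M[R]_(m, n)) :
  mxsum (a *: A) = a * mxsum A.
Proof.
rewrite /mxsum mulr_sumr; apply: eq_bigr => i _.
by rewrite mulr_sumr; apply: eq_bigr => j _; rewrite mxE.
Qed.

Lemma mxsum1 (R : pzSemiRingType) n : mxsum (1%:M : 'M[R]_n) = n%:R.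
Proof.
rewrite /mxsum -[n in RHS]card_ord -sumr_const; apply: eq_bigr => i _.
rewrite (bigD1 i) //= big1 ?addr0 => [|j /negbTE nji]; rewrite mxE ?eqxx //.
by rewrite eq_sym nji.
Qed.

Lemma mxsum_tr (R : nmodType) m n (A : 'M[R]_(m, n)) : mxsum A^T = mxsum A.
Proof.
rewrite /mxsum exchange_big; apply: eq_bigr => i _.
by apply: eq_bigr => j _; rewrite mxE.
Qed.

Lemma mxsumN (R : zmodType) m n (A : 'M[R]_(m, n)) : mxsum (- A) = - mxsum A.
Proof.
rewrite /mxsum -sumrN; apply: eq_bigr => i _.
by rewrite -sumrN; apply: eq_bigr => j _; rewrite mxE.
Qed.

Lemma mxsum_skew (R : numDomainType) n (A : 'M[R]_n) : A^T = - A -> mxsum A = 0.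
Proof.
move=> skewA; have : mxsum A = - mxsum A by rewrite -mxsumN -skewA mxsum_tr.
by move/eqP; rewrite -subr_eq0 opprK -mulr2n mulrn_eq0 /= => /eqP.
Qed.

Lemma mxsum_mul_const1 (R : pzSemiRingType) m n (A : 'M[R]_(m, n)) :
  mxsum (A *m const_mx 1 : 'cV_m) = mxsum A.
Proof.
apply: eq_bigr => i _; rewrite big_ord1 mxE.
by apply: eq_bigr => j _; rewrite mxE mulr1.
Qed.

Lemma mxtrace_const1_mul (R : pzSemiRingType) n (A : 'M[R]_n) :
  \tr (const_mx 1 *m A) = mxsum A.
Proof.
rewrite /mxtrace /mxsum exchange_big; apply: eq_bigr => i _; rewrite mxE.
by apply: eq_bigr => j _; rewrite mxE mul1r.
Qed.

Lemma trmx_exp (R : comPzRingType) n (A : 'M[R]_n) p : (A ^+ p)^T = A^T ^+ p.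
Proof.
elim: p => [|p IH]; first by rewrite !expr0 trmx1.
by rewrite exprSr -mulmxE trmx_mul IH mulmxE -exprS.
Qed.

Lemma skew_exp_odd (R : comPzRingType) n (A : 'M[R]_n) p :
  A^T = - A -> odd p -> (A ^+ p)^T = - A ^+ p.
Proof.
by move=> skewA oddp; rewrite trmx_exp skewA exprNn -signr_odd oddp expr1 mulN1r.
Qed.

Lemma mx_variation_of_constants (R : comPzRingType) n (A : 'M[R]_n) (c : 'cV_n)
    (w : nat -> 'cV_n) (y : nat -> R) :
  (forall j, w j.+1 = A *m w j + y j *: c) ->
  forall j, w j = A ^+ j *m w 0 + \sum_(t < j) y t *: (A ^+ (j - t.+1) *m c).
Proof.
move=> w_rec; elim=> [|j IH]; first by rewrite expr0 mul1mx big_ord0 addr0.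
rewrite w_rec IH mulmxDr mulmxA mulmxE -exprS big_ord_recr /= subnn expr0 mul1mx.
rewrite addrA; congr (_ + _ + _); rewrite mulmx_sumr; apply: eq_bigr => t _.
by rewrite -scalemxAr mulmxA mulmxE -exprS subSn.
Qed.

Lemma sum_even_terms (V : nmodType) (g : nat -> V) p :
  (forall c, g (2 * c).+1 = 0) ->
  \sum_(b < (2 * p).+1) g b = \sum_(c < p.+1) g (2 * c)%N.
Proof.
move=> g_odd; elim: p => [|p IH]; first by rewrite !big_ord1.
rewrite mulnS !addSn add0n [in LHS]big_ord_recr [in LHS]big_ord_recr /=.
by rewrite IH g_odd addr0 [in RHS]big_ord_recr /= mulnS.
Qed.

Lemma convolution_rec (R : comPzRingType) (c : R) (a y b : nat -> R) :
  c * c = -1 -> y 0 = 1 ->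
  (forall j, \sum_(t < j) y t * a (j - t.+1)%N = y j.+1 + c * a j) ->
  (forall j, b j = y j + c * y j.+1) ->
  forall j, b j.+2 = a j.+2 + \sum_(t < j.+1) a (j - t)%N * b t.
Proof.
move=> cc y0 conv bE j.
have conv1 : \sum_(t < j.+1) a (j - t)%N * y t = y j.+2 + c * a j.+1.
  by rewrite -conv; apply: eq_bigr => t _; rewrite mulrC subSS.
have conv2 : \sum_(t < j.+1) a (j - t)%N * y t.+1 = y j.+3 + c * a j.+2 - a j.+1.
  rewrite -conv [in RHS]big_ord_recl /= y0 mul1r subn1 addrAC subrr add0r.
  by apply: eq_bigr => t _; rewrite mulrC subSS.
under eq_bigr do rewrite bE mulrDr mulrCA.
rewrite big_split /= -mulr_sumr conv1 conv2 !bE.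
have -> : y j.+2 + c * a j.+1 + c * (y j.+3 + c * a j.+2 - a j.+1)
  = y j.+2 + c * y j.+3 + (c * c) * a j.+2 by ring.
rewrite cc; ring.
Qed.

Lemma Bmx_skew n : (Bmx n)^T = - Bmx n.
Proof.
apply/matrixP => i j; rewrite !mxE.
by case: ltngtP; rewrite ?mulrN ?mulr1 ?opprK ?mulr0 ?oppr0.
Qed.

Lemma Bmx1 : Bmx 1 = 0.
Proof. by apply/matrixP => i j; rewrite !ord1 !mxE /= mulr0. Qed.

Section Bordering.
Variable k : nat.
Local Notation wid := (widen_ord (leqnSn k)).

Lemma Bmx_widen (i l : 'I_k) : Bmx k.+1 (wid i) (wid l) = Bmx k i l.
Proof. by rewrite !mxE. Qed.

Lemma Bmx_last_col (i : 'I_k) : Bmx k.+1 (wid i) ord_max = 'i.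
Proof. by rewrite !mxE /= ltn_ord mulr1. Qed.

Lemma Bmx_last_row (l : 'I_k) : Bmx k.+1 ord_max (wid l) = - 'i.
Proof. by rewrite !mxE /= ltnNge (ltnW (ltn_ord l)) ltn_ord mulrN1. Qed.

Let v j := Bmx k.+1 ^+ j *m (const_mx 1 : 'cV_k.+1).
Let w j : 'cV_k := \col_i v j (wid i) 0.
Let y j := v j ord_max 0.

Lemma border_w_rec j : w j.+1 = Bmx k *m w j + y j *: const_mx 'i.
Proof.
apply/colP => i; rewrite /w /v exprS -mulmxE -mulmxA !mxE big_ord_recr /=.
rewrite Bmx_last_col mulrC; congr (_ + _).
by apply: eq_bigr => l _; rewrite Bmx_widen mxE.
Qed.

Lemma border_y_rec j : y j.+1 = - 'i * mxsum (w j).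
Proof.
rewrite /y /v exprS -mulmxE -mulmxA mxE big_ord_recr /= !mxE ltnn mulr0 mul0r addr0.
rewrite /mxsum mulr_sumr; apply: eq_bigr => l _.
by rewrite big_ord1 Bmx_last_row !mxE.
Qed.

Lemma mxsum_border j : mxsum (Bmx k.+1 ^+ j) = mxsum (w j) + y j.
Proof.
rewrite -mxsum_mul_const1 /mxsum big_ord_recr /= !big_ord1; congr (_ + _).
by apply: eq_bigr => i _; apply: eq_bigr => l _; rewrite ord1 [RHS]mxE.
Qed.

Lemma mxsum_border_top j :
  mxsum (w j) = mxsum (Bmx k ^+ j) + 'i * \sum_(t < j) y t * mxsum (Bmx k ^+ (j - t.+1)).
Proof.
have w0 : w 0 = const_mx 1.
  by rewrite /w /v expr0 mul1mx; apply/matrixP => i l; rewrite !mxE.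
rewrite (mx_variation_of_constants border_w_rec) w0 mxsumD mxsum_mul_const1.
rewrite mxsum_sum mulr_sumr; congr (_ + _); apply: eq_bigr => t _.
have -> : const_mx 'i = 'i *: (const_mx 1 : 'cV[algC]_k).
  by apply/matrixP => i l; rewrite !mxE mulr1.
by rewrite mxsumZ -scalemxAr mxsumZ mxsum_mul_const1 mulrCA.
Qed.

Lemma border_conv j :
  \sum_(t < j) y t * mxsum (Bmx k ^+ (j - t.+1)) = y j.+1 + 'i * mxsum (Bmx k ^+ j).
Proof.
rewrite border_y_rec mxsum_border_top; set s := \sum_(t < j) _.
have -> : - 'i * (mxsum (Bmx k ^+ j) + 'i * s) + 'i * mxsum (Bmx k ^+ j)
  = - ('i * 'i) * s by ring.
by rewrite -expr2 sqrCi opprK mul1r.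
Qed.

Lemma mxsum_border_pair j : mxsum (Bmx k.+1 ^+ j) = y j + 'i * y j.+1.
Proof.
by rewrite mxsum_border border_y_rec mulrA mulrN -expr2 sqrCi opprK mul1r addrC.
Qed.

Lemma mxsum_Bmx_rec j :
  mxsum (Bmx k.+1 ^+ j.+2) =
  mxsum (Bmx k ^+ j.+2) + \sum_(t < j.+1) mxsum (Bmx k ^+ (j - t)) * mxsum (Bmx k.+1 ^+ t).
Proof.
apply: (convolution_rec (c := 'i) (a := fun t => mxsum (Bmx k ^+ t)) (y := y)
          (b := fun t => mxsum (Bmx k.+1 ^+ t))).
- by rewrite -expr2 sqrCi.
- by rewrite /y /v expr0 mul1mx mxE.
- exact: border_conv.
- exact: mxsum_border_pair.
Qed.

End Bordering.

Lemma mxsum_Bmx_odd n r : mxsum (Bmx n ^+ (2 * r).+1) = 0.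
Proof. by apply/mxsum_skew/skew_exp_odd; rewrite ?Bmx_skew //= oddM. Qed.

Lemma dnmE n m : dnm n m = mxsum (Bmx n ^+ (2 * m)).
Proof. exact: mxtrace_const1_mul. Qed.

Theorem proposition5p1 :
  (forall n : nat, (2 <= n)%N -> dnm n 0 = 1 + dnm n.-1 0 /\ dnm n 0 = n%:R) /\
  dnm 1 0 = 1 /\
  (forall m : nat, dnm 1 m = (m == 0)%N%:R) /\
  (forall n m : nat, (2 <= n)%N -> (1 <= m)%N ->
     dnm n m = dnm n.-1 m + \sum_(k < m) dnm n.-1 k * dnm n (m - k - 1)%N).
Proof.
have dnm0 n : dnm n 0 = n%:R by rewrite dnmE expr0 mxsum1.
split; [|split; [|split]].
- by case=> [|n] // _; rewrite !dnm0 -natr1 addrC.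
- exact: dnm0.
- case=> [|m]; first exact: dnm0.
  by rewrite dnmE Bmx1 expr0n mxsum0.
- case=> [|[|n]] [|m] // _ _.
  rewrite !dnmE mulnS !addSn add0n mxsum_Bmx_rec /=; congr (_ + _).
  pose g t := mxsum (Bmx n.+1 ^+ (2 * m - t)%N) * mxsum (Bmx n.+2 ^+ t).
  rewrite (sum_even_terms (g := g)) => [|c]; last by rewrite /g mxsum_Bmx_odd mulr0.
  rewrite (reindex_inj rev_ord_inj); apply: eq_bigr => c _; rewrite /g !dnmE /=.
  have le_cm : (c <= m)%N by rewrite -ltnS.
  by rewrite subSS -mulnBr subKn // subn1 subSn.
Qed.
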